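(* For each $N\in\mathbb{N}^*$ there exists a constant $K_N$ such that for all $(i_1,\dots,i_N)\in\{1,\dots,6\}^N$ and all $(x,y)\in\mathcal{D}$, $$|x_{i_1,\dots,i_N}(x,y)-z_{i_1,\dots,i_N}(x)|\leq K_N y\quad\text{and}\quad |y_{i_1,\dots,i_N}(x,y)|\leq K_N y.$$
   Context: Every non-degenerate triangle is mapped by a similitude to a triangle with vertices $(0,0)$, $(1,0)$, $(x,y)$, with the longest edge sent to $[(0,0),(1,0)]$ and the shortest edge to $[(0,0),(x,y)]$; $(x,y)$ is its characterizing point and $\mathcal{D}\subset[0,1/2]\times[0,\sqrt3/2]$ is the set of characterizing points (flat triangles have $y=0$). For the triangle with vertices $A=(0,0)$, $B=(x,y)$, $C=(1,0)$, let $D,E,F$ be the midpoints of $[A,B],[B,C],[A,C]$ and $G$ the barycenter; the barycentric subdivision gives $T_1=\{A,D,G\}$, $T_2=\{D,B,G\}$, $T_3=\{B,E,G\}$, $T_4=\{E,C,G\}$, $T_5=\{C,F,G\}$, $T_6=\{F,A,G\}$, and $(x_i(x,y),y_i(x,y))$ denotes the characterizing point of $T_i$. Set $z_i(x)=x_i(x,0)$ for $x\in[0,1/2]$. Let $(\iota_n)_{n\ge1}$ be i.i.d. uniform on $\{1,\dots,6\}$ and define the coupled chains $(X_{n+1},Y_{n+1})=(x_{\iota_{n+1}}(X_n,Y_n),y_{\iota_{n+1}}(X_n,Y_n))$ and $Z_{n+1}=z_{\iota_{n+1}}(Z_n)$. For $(x,y)\in\mathcal{D}$ and $(i_1,\dots,i_N)\in\{1,\dots,6\}^N$,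 $x_{i_1,\dots,i_N}(x,y)$, $y_{i_1,\dots,i_N}(x,y)$ and $z_{i_1,\dots,i_N}(x)$ denote the values of $X_N$, $Y_N$ and $Z_N$ when $(X_0,Y_0)=(x,y)$, $Z_0=x$ and $(\iota_1,\dots,\iota_N)=(i_1,\dots,i_N)$. *)

From Stdlib Require Import Reals Lra List.
Open Scope R_scope.

Definition pt := (R * R)%type.

Definition dist (P Q : pt) : R :=
  sqrt ((fst P - fst Q)^2 + (snd P - snd Q)^2).

(* Characterizing point of the triangle {P,Q,S}: with side lengths
   a >= b >= c (a longest, c shortest), the similitude sends the longest
   edge to [(0,0),(1,0)] and the shortest edge to [(0,0),(x,y)], y >= 0, so
   x^2+y^2 = (c/a)^2 and (1-x)^2+y^2 = (b/a)^2. *)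
Definition char_point (P Q S : pt) : pt :=
  let u := dist P Q in let v := dist Q S in let w := dist P S in
  let a := Rmax u (Rmax v w) in
  let c := Rmin u (Rmin v w) in
  let b := u + v + w - a - c in
  let x := (a^2 + c^2 - b^2) / (2 * a^2) in
  (x, sqrt ((c / a)^2 - x^2)).

(* Non-degenerate triangle: pairwise distinct vertices (flat ones allowed). *)
Definition inD (p : pt) : Prop :=
  exists P Q S : pt, P <> Q /\ Q <> S /\ P <> S /\ char_point P Q S = p.

Definition mid (P Q : pt) : pt := ((fst P + fst Q) / 2, (snd P + snd Q) / 2).

Definition step (i : nat) (p : pt) : pt :=
  let A : pt := (0, 0) in let B := p in let C : pt := (1, 0) in
  let D := mid A B in let E := mid B C in let F := mid A C in
  let G : pt := ((fst A + fst B + fst C) / 3, (snd A + snd B + snd C) / 3) in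
  match i with
  | 1%nat => char_point A D G
  | 2%nat => char_point D B G
  | 3%nat => char_point B E G
  | 4%nat => char_point E C G
  | 5%nat => char_point C F G
  | _ => char_point F A G
  end.

Definition zstep (i : nat) (x : R) : R := fst (step i (x, 0)).

Definition xy_iter (l : list nat) (p : pt) : pt :=
  fold_left (fun q i => step i q) l p.
Definition z_iter (l : list nat) (x : R) : R :=
  fold_left (fun t i => zstep i t) l x.

(* Each of the six sub-triangles of the barycentric subdivision of (0,0), (x,y), (1,0)
   has sides at most 2 and longest side at least 1/6.  The abscissa of a characterizing
   point is a rational function of the sorted side lengths, and sorting is 1-Lipschitz,
   so on such triangles it is Lipschitz in the vertices; replacing (x,y) by the flat
   point (z,0) moves every vertex by O(|x - z| + y).  The ordinate is |cross| / a^2 by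
   Heron's formula, a being the longest side, and each sub-triangle has cross product
   y/6, so one step multiplies y by at most 6.  Induction on N concludes. *)

From Stdlib Require Import Reals Lra Psatz List.
Open Scope R_scope.

Ltac abs_lra := unfold Rabs in *; repeat match goal with
  | |- context [Rcase_abs ?t] => destruct (Rcase_abs t)
  | H : context [Rcase_abs ?t] |- _ => destruct (Rcase_abs t) end; lra.

Lemma abs_le_sqrt_sum_sqr a b : Rabs a <= sqrt (a^2 + b^2).
Proof.
  rewrite <- sqrt_Rsqr_abs. apply sqrt_le_1_alt. unfold Rsqr. nra.
Qed.

Lemma sqrt_sum_sqr_le a b c d :
  sqrt (a^2 + b^2) <= sqrt (c^2 + d^2) + Rabs (a - c) + Rabs (b - d).
Proof.
  set (S := sqrt (c^2 + d^2)).
  assert (HS : 0 <= S) by apply sqrt_pos.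
  assert (HSS : S * S = c^2 + d^2) by (apply sqrt_sqrt; nra).
  assert (Hc : Rabs c <= S) by apply abs_le_sqrt_sum_sqr.
  assert (Hd : Rabs d <= S) by (unfold S; rewrite Rplus_comm; apply abs_le_sqrt_sum_sqr).
  assert (Ha : Rabs a <= Rabs c + Rabs (a - c)) by abs_lra.
  assert (Hb : Rabs b <= Rabs d + Rabs (b - d)) by abs_lra.
  rewrite <- (sqrt_pow2 (S + Rabs (a - c) + Rabs (b - d))) by
    (pose proof (Rabs_pos (a - c)); pose proof (Rabs_pos (b - d)); lra).
  apply sqrt_le_1_alt.
  rewrite <- (pow2_abs a), <- (pow2_abs b).
  rewrite <- (pow2_abs c), <- (pow2_abs d) in HSS.
  pose proof (Rabs_pos a); pose proof (Rabs_pos b); pose proof (Rabs_pos c);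
  pose proof (Rabs_pos d); pose proof (Rabs_pos (a - c)); pose proof (Rabs_pos (b - d)).
  nra.
Qed.

Lemma dist_lipschitz P Q P' Q' :
  Rabs (dist P Q - dist P' Q') <=
  Rabs ((fst P - fst Q) - (fst P' - fst Q')) + Rabs ((snd P - snd Q) - (snd P' - snd Q')).
Proof.
  unfold dist.
  pose proof (sqrt_sum_sqr_le (fst P - fst Q) (snd P - snd Q) (fst P' - fst Q') (snd P' - snd Q')).
  pose proof (sqrt_sum_sqr_le (fst P' - fst Q') (snd P' - snd Q') (fst P - fst Q) (snd P - snd Q)).
  rewrite (Rabs_minus_sym (fst P' - fst Q')), (Rabs_minus_sym (snd P' - snd Q')) in H0.
  apply Rabs_le. lra.
Qed.

Lemma dist_le_abs_add P Q : dist P Q <= Rabs (fst P - fst Q) + Rabs (snd P - snd Q).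
Proof.
  unfold dist. pose proof (sqrt_sum_sqr_le (fst P - fst Q) (snd P - snd Q) 0 0) as H.
  rewrite !Rminus_0_r, pow_i, Rplus_0_r, sqrt_0 in H by lia. lra.
Qed.

Lemma abs_fst_le_dist P Q : Rabs (fst P - fst Q) <= dist P Q.
Proof. apply abs_le_sqrt_sum_sqr. Qed.

Lemma dist_sqr P Q : dist P Q ^ 2 = (fst P - fst Q)^2 + (snd P - snd Q)^2.
Proof.
  unfold dist. apply pow2_sqrt.
  pose proof (pow2_ge_0 (fst P - fst Q)); pose proof (pow2_ge_0 (snd P - snd Q)); lra.
Qed.

Lemma dist_pos_neq P Q : P <> Q -> 0 < dist P Q.
Proof.
  intros HPQ. destruct (Rle_lt_or_eq_dec 0 (dist P Q) (sqrt_pos _)) as [H | H]; [exact H |].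
  exfalso. apply HPQ. pose proof (dist_sqr P Q) as Hs. rewrite <- H in Hs.
  destruct P as [p1 p2], Q as [q1 q2]; cbn [fst snd] in Hs.
  rewrite <- !Rsqr_pow2, Rsqr_0 in Hs.
  pose proof (Rle_0_sqr (p1 - q1)); pose proof (Rle_0_sqr (p2 - q2)).
  assert (E1 : Rsqr (p1 - q1) = 0) by lra. assert (E2 : Rsqr (p2 - q2) = 0) by lra.
  apply Rsqr_0_uniq in E1, E2. f_equal; lra.
Qed.

Definition max3 u v w := Rmax u (Rmax v w).
Definition min3 u v w := Rmin u (Rmin v w).
Definition mid3 u v w := u + v + w - max3 u v w - min3 u v w.

Lemma le_max3 u v w : u <= max3 u v w /\ v <= max3 u v w /\ w <= max3 u v w.
Proof. unfold max3, Rmax. repeat destruct Rle_dec; lra. Qed.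

Lemma max3_lub u v w M : u <= M -> v <= M -> w <= M -> max3 u v w <= M.
Proof. intros. unfold max3. repeat apply Rmax_lub; assumption. Qed.

Lemma sort3_le u v w : 0 <= u -> 0 <= v -> 0 <= w ->
  0 <= min3 u v w <= mid3 u v w /\ mid3 u v w <= max3 u v w.
Proof. intros. unfold mid3, max3, min3, Rmax, Rmin. repeat destruct Rle_dec; lra. Qed.

Ltac pick_case := first [ repeat split; lra | left; repeat split; lra | right; pick_case ].

Lemma sort3_cases u v w :
  (max3 u v w = u /\ mid3 u v w = v /\ min3 u v w = w) \/
  (max3 u v w = u /\ mid3 u v w = w /\ min3 u v w = v) \/
  (max3 u v w = v /\ mid3 u v w = u /\ min3 u v w = w) \/
  (max3 u v w = v /\ mid3 u v w = w /\ min3 u v w = u) \/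
  (max3 u v w = w /\ mid3 u v w = u /\ min3 u v w = v) \/
  (max3 u v w = w /\ mid3 u v w = v /\ min3 u v w = u).
Proof. unfold mid3, max3, min3, Rmax, Rmin. repeat destruct Rle_dec; pick_case. Qed.

Lemma sort3_lipschitz u v w u' v' w' e :
  Rabs (u - u') <= e -> Rabs (v - v') <= e -> Rabs (w - w') <= e ->
  Rabs (max3 u v w - max3 u' v' w') <= e /\ Rabs (min3 u v w - min3 u' v' w') <= e /\
  Rabs (mid3 u v w - mid3 u' v' w') <= 5 * e.
Proof.
  intros. assert (Hmax : Rabs (max3 u v w - max3 u' v' w') <= e)
    by (unfold max3, Rmax; repeat destruct Rle_dec; abs_lra).
  assert (Hmin : Rabs (min3 u v w - min3 u' v' w') <= e)
    by (unfold min3, Rmin; repeat destruct Rle_dec; abs_lra).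
  repeat split; try assumption.
  unfold mid3. revert Hmax Hmin. generalize (max3 u v w) (max3 u' v' w') (min3 u v w) (min3 u' v' w').
  intros. abs_lra.
Qed.

Lemma sqr_lipschitz a a' M : Rabs a <= M -> Rabs a' <= M -> Rabs (a^2 - a'^2) <= 2 * M * Rabs (a - a').
Proof.
  intros Ha Ha'. replace (a^2 - a'^2) with ((a + a') * (a - a')) by ring.
  rewrite Rabs_mult. apply Rmult_le_compat_r; [apply Rabs_pos | abs_lra].
Qed.

Lemma div_lipschitz n d n' d' M m : 0 < m -> m <= d -> m <= d' -> Rabs n' <= M ->
  Rabs (n / d - n' / d') <= Rabs (n - n') / m + M * Rabs (d - d') / m^2.
Proof.
  intros Hm Hd Hd' Hn'.
  replace (n / d - n' / d') with ((n - n') / d + n' * (d' - d) / (d * d')) by (field; lra).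
  eapply Rle_trans; [apply Rabs_triang |]. apply Rplus_le_compat.
  - unfold Rdiv. rewrite Rabs_mult, Rabs_inv, (Rabs_right d) by lra.
    apply Rmult_le_compat_l; [apply Rabs_pos | apply Rinv_le_contravar; lra].
  - unfold Rdiv. rewrite !Rabs_mult, Rabs_inv, Rabs_mult, (Rabs_right d), (Rabs_right d'),
      (Rabs_minus_sym d') by lra.
    apply Rmult_le_compat.
    + apply Rmult_le_pos; apply Rabs_pos.
    + left. apply Rinv_0_lt_compat. nra.
    + apply Rmult_le_compat_r; [apply Rabs_pos | assumption].
    + apply Rinv_le_contravar; nra.
Qed.

Definition char_x u v w :=
  (max3 u v w ^ 2 + min3 u v w ^ 2 - mid3 u v w ^ 2) / (2 * max3 u v w ^ 2).

Lemma char_x_lipschitz u v w u' v' w' e :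
  0 <= u <= 2 -> 0 <= v <= 2 -> 0 <= w <= 2 ->
  0 <= u' <= 2 -> 0 <= v' <= 2 -> 0 <= w' <= 2 ->
  1/6 <= max3 u v w -> 1/6 <= max3 u' v' w' ->
  Rabs (u - u') <= e -> Rabs (v - v') <= e -> Rabs (w - w') <= e ->
  Rabs (char_x u v w - char_x u' v' w') <= 25000 * e.
Proof.
  intros Hu Hv Hw Hu' Hv' Hw' Ha Ha' Eu Ev Ew.
  assert (He : 0 <= e) by (pose proof (Rabs_pos (u - u')); lra).
  destruct (sort3_lipschitz u v w u' v' w' e Eu Ev Ew) as [Ea [Ec Eb]].
  destruct (sort3_le u v w) as [[Hc Hcb] Hba]; try lra.
  destruct (sort3_le u' v' w') as [[Hc' Hcb'] Hba']; try lra.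
  assert (Ha2 : max3 u v w <= 2) by (apply max3_lub; lra).
  assert (Ha2' : max3 u' v' w' <= 2) by (apply max3_lub; lra).
  unfold char_x.
  set (a := max3 u v w) in *. set (b := mid3 u v w) in *. set (c := min3 u v w) in *.
  set (a' := max3 u' v' w') in *. set (b' := mid3 u' v' w') in *. set (c' := min3 u' v' w') in *.
  clearbody a b c a' b' c'.
  assert (Sa : Rabs (a^2 - a'^2) <= 2 * 2 * e)
    by (eapply Rle_trans; [apply sqr_lipschitz with (M := 2); apply Rabs_le; lra | nra]).
  assert (Sb : Rabs (b^2 - b'^2) <= 2 * 2 * (5 * e))
    by (eapply Rle_trans; [apply sqr_lipschitz with (M := 2); apply Rabs_le; lra | nra]).
  assert (Sc : Rabs (c^2 - c'^2) <= 2 * 2 * e)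
    by (eapply Rle_trans; [apply sqr_lipschitz with (M := 2); apply Rabs_le; lra | nra]).
  eapply Rle_trans; [apply div_lipschitz with (M := 8) (m := 1/18) |].
  - lra.
  - nra.
  - nra.
  - apply Rabs_le. split; nra.
  - replace (a^2 + c^2 - b^2 - (a'^2 + c'^2 - b'^2)) with
      ((a^2 - a'^2) + (c^2 - c'^2) - (b^2 - b'^2)) by ring.
    replace (2 * a^2 - 2 * a'^2) with (2 * (a^2 - a'^2)) by ring.
    rewrite Rabs_mult, (Rabs_right 2) by lra.
    assert (Rabs ((a^2 - a'^2) + (c^2 - c'^2) - (b^2 - b'^2)) <= 28 * e).
    { revert Sa Sb Sc. generalize (a^2 - a'^2) (b^2 - b'^2) (c^2 - c'^2).
      intros sa sb sc Sa Sb Sc. clear - Sa Sb Sc. abs_lra. }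
    replace ((1/18)^2) with (1/324) by field.
    apply Rle_trans with (28 * e / (1/18) + 8 * (2 * (4 * e)) / (1/324)); [| lra].
    apply Rplus_le_compat; unfold Rdiv; apply Rmult_le_compat_r; lra.
Qed.

Definition longest (P Q S : pt) := max3 (dist P Q) (dist Q S) (dist P S).

Definition cross (P Q S : pt) :=
  (fst Q - fst P) * (snd S - snd P) - (snd Q - snd P) * (fst S - fst P).

Lemma char_point_eq P Q S :
  char_point P Q S =
  (char_x (dist P Q) (dist Q S) (dist P S),
   sqrt ((min3 (dist P Q) (dist Q S) (dist P S) / longest P Q S)^2
         - char_x (dist P Q) (dist Q S) (dist P S) ^ 2)).
Proof. reflexivity. Qed.

Lemma snd_char_point P Q S : 0 < longest P Q S ->
  snd (char_point P Q S) = Rabs (cross P Q S) / longest P Q S ^ 2.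
Proof.
  intros Ha. rewrite char_point_eq. cbn [snd].
  rewrite <- (sqrt_pow2 (Rabs (cross P Q S) / longest P Q S ^ 2))
    by (apply Rmult_le_pos; [apply Rabs_pos | left; apply Rinv_0_lt_compat, pow_lt; lra]).
  f_equal. unfold char_x. fold (longest P Q S) in *.
  pose proof (dist_sqr P Q) as hu. pose proof (dist_sqr Q S) as hv. pose proof (dist_sqr P S) as hw.
  assert (Hcr : Rabs (cross P Q S) ^ 2 = (2 * dist P Q ^ 2 * dist Q S ^ 2 + 2 * dist Q S ^ 2 * dist P S ^ 2
     + 2 * dist P S ^ 2 * dist P Q ^ 2 - dist P Q ^ 4 - dist Q S ^ 4 - dist P S ^ 4) / 4).
  { rewrite pow2_abs. replace (dist P Q ^ 4) with ((dist P Q ^ 2) ^ 2) by ring.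
    replace (dist Q S ^ 4) with ((dist Q S ^ 2) ^ 2) by ring.
    replace (dist P S ^ 4) with ((dist P S ^ 2) ^ 2) by ring.
    rewrite hu, hv, hw. unfold cross. field. }
  replace ((Rabs (cross P Q S) / longest P Q S ^ 2) ^ 2)
    with (Rabs (cross P Q S) ^ 2 / longest P Q S ^ 4) by (field; lra).
  rewrite Hcr. unfold longest in *. clear hu hv hw Hcr.
  destruct (sort3_cases (dist P Q) (dist Q S) (dist P S))
    as [[H1 [H2 H3]]|[[H1 [H2 H3]]|[[H1 [H2 H3]]|[[H1 [H2 H3]]|[[H1 [H2 H3]]|[H1 [H2 H3]]]]]]];
    rewrite H1, H2, H3 in *.
  all: field; lra.
Qed.

Definition box (p : pt) : Prop := 0 <= fst p <= 1/2 /\ 0 <= snd p <= 1.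

Lemma char_point_box P Q S : 0 < longest P Q S -> box (char_point P Q S).
Proof.
  intros Ha. rewrite char_point_eq. unfold box; cbn [fst snd].
  destruct (sort3_le (dist P Q) (dist Q S) (dist P S)) as [[Hc Hcb] Hba]; try apply sqrt_pos.
  unfold char_x. fold (longest P Q S) in *.
  set (a := longest P Q S) in *. set (b := mid3 _ _ _) in *. set (c := min3 _ _ _) in *.
  set (x := (a ^ 2 + c ^ 2 - b ^ 2) / (2 * a ^ 2)).
  assert (Hx : x = 1/2 - (b^2 - c^2) / (2 * a^2)) by (unfold x; field; lra).
  assert (Hd : 0 <= (b^2 - c^2) / (2 * a^2))
    by (apply Rmult_le_pos; [nra | left; apply Rinv_0_lt_compat; nra]).
  assert (Hx0 : 0 <= x) by (apply Rmult_le_pos; [nra | left; apply Rinv_0_lt_compat; nra]).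
  assert (Hca : 0 <= c / a <= 1).
  { split; [apply Rmult_le_pos; [lra | left; apply Rinv_0_lt_compat; lra] |].
    apply Rmult_le_reg_r with a; [lra |]. unfold Rdiv. rewrite Rmult_assoc, Rinv_l; lra. }
  repeat split; try lra; [apply sqrt_pos |].
  rewrite <- sqrt_1. apply sqrt_le_1_alt. pose proof (pow2_ge_0 x). nra.
Qed.

Lemma abs_fst_le_longest P Q S :
  Rabs (fst P - fst Q) <= longest P Q S /\ Rabs (fst Q - fst S) <= longest P Q S /\
  Rabs (fst P - fst S) <= longest P Q S.
Proof.
  destruct (le_max3 (dist P Q) (dist Q S) (dist P S)) as [H1 [H2 H3]].
  pose proof (abs_fst_le_dist P Q); pose proof (abs_fst_le_dist Q S); pose proof (abs_fst_le_dist P S).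
  unfold longest. repeat split; eapply Rle_trans; eassumption.
Qed.

Definition sub_triangle (i : nat) (p : pt) : pt * pt * pt :=
  let A : pt := (0, 0) in let B := p in let C : pt := (1, 0) in
  let D := mid A B in let E := mid B C in let F := mid A C in
  let G : pt := ((fst A + fst B + fst C) / 3, (snd A + snd B + snd C) / 3) in
  match i with
  | 1%nat => (A, D, G)
  | 2%nat => (D, B, G)
  | 3%nat => (B, E, G)
  | 4%nat => (E, C, G)
  | 5%nat => (C, F, G)
  | _ => (F, A, G)
  end.

Definition vtx1 i p := fst (fst (sub_triangle i p)).
Definition vtx2 i p := snd (fst (sub_triangle i p)).
Definition vtx3 i p := snd (sub_triangle i p).

Lemma step_sub_triangle i p : step i p = char_point (vtx1 i p) (vtx2 i p) (vtx3 i p).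
Proof. do 7 (destruct i as [|i]; [reflexivity |]). reflexivity. Qed.

Ltac case_sub_triangle i :=
  destruct i as [|[|[|[|[|[|[|i]]]]]]]; unfold vtx1, vtx2, vtx3, sub_triangle, mid; cbn [fst snd].

(* Two vertices of each sub-triangle have abscissae at least 1/6 apart. *)
Lemma longest_sub_triangle_ge i X Y : box (X, Y) ->
  1/6 <= longest (vtx1 i (X, Y)) (vtx2 i (X, Y)) (vtx3 i (X, Y)).
Proof.
  intros [HX HY]; cbn [fst snd] in HX, HY.
  generalize (abs_fst_le_longest (vtx1 i (X, Y)) (vtx2 i (X, Y)) (vtx3 i (X, Y))).
  case_sub_triangle i; intros; abs_lra.
Qed.

Lemma sub_triangle_sides_le i X Y : box (X, Y) ->
  dist (vtx1 i (X, Y)) (vtx2 i (X, Y)) <= 2 /\ dist (vtx2 i (X, Y)) (vtx3 i (X, Y)) <= 2 /\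
  dist (vtx1 i (X, Y)) (vtx3 i (X, Y)) <= 2.
Proof.
  intros [HX HY]; cbn [fst snd] in HX, HY.
  case_sub_triangle i; repeat split; (eapply Rle_trans; [apply dist_le_abs_add | cbn [fst snd]; abs_lra]).
Qed.

Lemma abs_cross_sub_triangle i X Y : 0 <= Y ->
  Rabs (cross (vtx1 i (X, Y)) (vtx2 i (X, Y)) (vtx3 i (X, Y))) = Y / 6.
Proof.
  intros HY. unfold cross.
  case_sub_triangle i; match goal with |- Rabs ?c = _ =>
    assert (Hc : c = Y / 6 \/ c = - (Y / 6)) by (first [left; field | right; field]) end;
  destruct Hc as [-> | ->]; rewrite ?Rabs_Ropp; apply Rabs_right; lra.
Qed.

Lemma sub_triangle_sides_lipschitz i X Y Z : 0 <= Y ->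
  Rabs (dist (vtx1 i (X, Y)) (vtx2 i (X, Y)) - dist (vtx1 i (Z, 0)) (vtx2 i (Z, 0))) <= Rabs (X - Z) + Y /\
  Rabs (dist (vtx2 i (X, Y)) (vtx3 i (X, Y)) - dist (vtx2 i (Z, 0)) (vtx3 i (Z, 0))) <= Rabs (X - Z) + Y /\
  Rabs (dist (vtx1 i (X, Y)) (vtx3 i (X, Y)) - dist (vtx1 i (Z, 0)) (vtx3 i (Z, 0))) <= Rabs (X - Z) + Y.
Proof.
  intros HY.
  case_sub_triangle i; repeat split; (eapply Rle_trans; [apply dist_lipschitz | cbn [fst snd]; abs_lra]).
Qed.

Lemma step_box i p : box p -> box (step i p).
Proof.
  destruct p as [X Y]. intros H. rewrite step_sub_triangle. apply char_point_box.
  pose proof (longest_sub_triangle_ge i X Y H). lra.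
Qed.

Lemma snd_step_le i X Y : box (X, Y) -> snd (step i (X, Y)) <= 6 * Y.
Proof.
  intros H. pose proof (longest_sub_triangle_ge i X Y H) as Ha.
  rewrite step_sub_triangle, snd_char_point, abs_cross_sub_triangle by (destruct H; simpl in *; lra).
  set (a := longest _ _ _) in *.
  apply Rmult_le_reg_r with (a ^ 2); [apply pow_lt; lra |].
  unfold Rdiv. rewrite Rmult_assoc, Rinv_l by (apply pow_nonzero; lra).
  destruct H as [_ HY]; cbn [snd] in HY.
  assert (1/36 <= a ^ 2) by (simpl; nra). nra.
Qed.

Lemma fst_step_lipschitz i X Y Z : box (X, Y) -> box (Z, 0) ->
  Rabs (fst (step i (X, Y)) - fst (step i (Z, 0))) <= 25000 * (Rabs (X - Z) + Y).
Proof.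
  intros HXY HZ. rewrite !step_sub_triangle, !char_point_eq. cbn [fst].
  pose proof (longest_sub_triangle_ge i X Y HXY). pose proof (longest_sub_triangle_ge i Z 0 HZ).
  destruct (sub_triangle_sides_le i X Y HXY) as [s1 [s2 s3]].
  destruct (sub_triangle_sides_le i Z 0 HZ) as [t1 [t2 t3]].
  destruct (sub_triangle_sides_lipschitz i X Y Z) as [l1 [l2 l3]]; [destruct HXY; simpl in *; lra |].
  apply char_x_lipschitz; repeat split; auto; apply sqrt_pos.
Qed.

Lemma xy_iter_box l p : box p -> box (xy_iter l p).
Proof.
  revert p. induction l as [|i l IH]; intros p Hp; [exact Hp |].
  apply IH, step_box, Hp.
Qed.

Lemma z_iter_box l x : box (x, 0) -> box (z_iter l x, 0).
Proof.
  revert x. induction l as [|i l IH]; intros x Hx; [exact Hx |].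
  apply IH. destruct (step_box i (x, 0) Hx) as [H _]. unfold box, zstep; simpl; lra.
Qed.

Lemma xy_iter_snoc l i p : xy_iter (l ++ i :: nil) p = step i (xy_iter l p).
Proof. apply fold_left_app. Qed.

Lemma z_iter_snoc l i x : z_iter (l ++ i :: nil) x = zstep i (z_iter l x).
Proof. apply fold_left_app. Qed.

(* One step turns the errors (e, y) into at most (25000 (e + y), 6 y). *)
Lemma xy_iter_close_to_z_iter l x y : box (x, y) ->
  Rabs (fst (xy_iter l (x, y)) - z_iter l x) <= 50000 ^ length l * y /\
  Rabs (snd (xy_iter l (x, y))) <= 50000 ^ length l * y.
Proof.
  intros Hxy. induction l as [|i l IH] using rev_ind.
  - destruct Hxy as [_ Hy]; simpl in *.
    rewrite Rminus_diag, Rabs_R0, Rabs_right by lra. split; lra.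
  - rewrite xy_iter_snoc, z_iter_snoc, length_app, pow_add. unfold zstep.
    pose proof (xy_iter_box l (x, y) Hxy) as HXY.
    assert (HZ : box (z_iter l x, 0)) by (apply z_iter_box; destruct Hxy; split; simpl in *; lra).
    destruct (xy_iter l (x, y)) as [X Y]. cbn [fst snd] in IH |- *.
    destruct IH as [IHx IHy].
    pose proof (fst_step_lipschitz i X Y (z_iter l x) HXY HZ).
    pose proof (snd_step_le i X Y HXY).
    destruct (step_box i (X, Y) HXY) as [_ Hs].
    destruct HXY as [_ HY]; cbn [snd] in HY. rewrite Rabs_right in IHy by lra.
    replace (50000 ^ length l * 50000 ^ length (i :: nil) * y)
      with (50000 * (50000 ^ length l * y)) by (simpl; ring).
    set (K := 50000 ^ length l * y) in *.
    split; [lra | rewrite Rabs_right; lra].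
Qed.

Lemma inD_box p : inD p -> box p.
Proof.
  intros [P [Q [S [HPQ [_ [_ <-]]]]]]. apply char_point_box.
  destruct (le_max3 (dist P Q) (dist Q S) (dist P S)) as [H _].
  pose proof (dist_pos_neq P Q HPQ). unfold longest. lra.
Qed.

Theorem lemma21 :
  forall N : nat, (1 <= N)%nat ->
  exists K : R,
    forall l : list nat, length l = N -> Forall (fun i => (1 <= i <= 6)%nat) l ->
    forall x y : R, inD (x, y) ->
      Rabs (fst (xy_iter l (x, y)) - z_iter l x) <= K * y /\
      Rabs (snd (xy_iter l (x, y))) <= K * y.
Proof.
  intros N _. exists (50000 ^ N).
  (* [step] is total, so the range of the indices plays no role. *)
  intros l <- _ x y HD.
  apply xy_iter_close_to_z_iter, inD_box, HD.
Qed.
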